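(* Let $\varepsilon>0$ and let $\mathcal{A}\subseteq\mathcal{Z}$ with $z^\star\in\mathcal{A}$ be such that $\Delta_z:=(z^\star-z)^\top\theta^\star\le4\varepsilon$ for every $z\in\mathcal{A}\setminus\{z^\star\}$. Then $$\mathcal{V}^\star_{\mathrm{lin}}(\mathcal{A}:\mathcal{X}-x_1)\le 64\,\boldsymbol\tau^\star_{\mathrm{lin}}(\mathcal{Z}:\mathcal{X}-x_1)\,\varepsilon^2.$$ Consequently, if $\mathbf q\in\Delta^{(K)}$ is arbitrary and $\mathbf p=\tfrac12(\mathbf p_{\mathrm{xor}}(\mathcal{A})+\mathbf q)$, then $\mathcal{V}_{\mathrm{cov}}(\mathcal{A}:\mathcal{X},\mathbf p)\le 512\,\boldsymbol\tau^\star_{\mathrm{lin}}(\mathcal{Z}:\mathcal{X}-x_1)\,\varepsilon^2$.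
   Context: $\mathcal{X}=\{x_1,\dots,x_K\}\subset\mathbb{R}^d$, $\mathcal{Z}\subset\mathbb{R}^d$ finite, $\theta^\star\in\mathbb{R}^d$, $z^\star$ the unique maximizer of $z^\top\theta^\star$ over $\mathcal{Z}$. $\Delta^{(K)}$ is the probability simplex on $[K]$. For $\mathbf p\in\Delta^{(K)}$: $\bar x_{\mathbf p}:=\sum_ip_ix_i$, $\mathbf\Sigma_{\mathrm{cov},\mathbf p}:=\sum_ip_i(x_i-\bar x_{\mathbf p})(x_i-\bar x_{\mathbf p})^\top$, $\mathbf\Sigma_{-1,\mathbf p}:=\sum_ip_i(x_i-x_1)(x_i-x_1)^\top$. For PSD $\mathbf A$, $\|y\|_{\mathbf A^{-1}}:=\lim_{\lambda\to0^+}\sqrt{y^\top(\mathbf A+\lambda\mathbf I_d)^{-1}y}$ (possibly $+\infty$). $\boldsymbol\tau^\star_{\mathrm{lin}}(\mathcal{Z}:\mathcal{X}-x_1):=\min_{\mathbf p\in\Delta^{(K)}}\max_{z\in\mathcal{Z}\setminus\{z^\star\}}\|z^\star-z\|^2_{\mathbf\Sigma_{-1,\mathbf p}^{-1}}/((z^\star-z)^\top\theta^\star)^2$. $\mathcal{V}_{\mathrm{cov}}(\mathcal{A}:\mathcal{X},\mathbf p):=\max_{u,u'\in\mathcal{A}}\|u-u'\|^2_{\mathbf\Sigma_{\mathrm{cov},\mathbf p}^{-1}}$; $\mathcal{V}^\star_{\mathrm{lin}}(\mathcal{A}:\mathcal{X}-x_1):=\min_{\mathbf p\in\Delta^{(K)}}\max_{u,u'\in\mathcal{A}}\|u-u'\|^2_{\mathbf\Sigma_{-1,\mathbf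 p}^{-1}}$. $\mathbf p_{\mathrm{xor}}(\mathcal{A}):=(\tfrac12,\tfrac12\tilde p_2,\dots,\tfrac12\tilde p_K)$, where $\tilde{\mathbf p}\in\Delta^{(K)}$ is a minimizer in the definition of $\mathcal{V}^\star_{\mathrm{lin}}(\mathcal{A}:\mathcal{X}-x_1)$ with $\tilde p_1=0$. *)

From HB Require Import structures.
From mathcomp Require Import all_boot all_order all_algebra.
From mathcomp Require Import all_classical all_reals all_analysis.
Set Implicit Arguments. Unset Strict Implicit. Unset Printing Implicit Defensive.
Import Order.TTheory GRing.Theory Num.Theory.
Import numFieldNormedType.Exports.
Local Open Scope classical_set_scope.
Local Open Scope ring_scope.

(* Vectors in R^d are column vectors 'cV[R]_d.  The arm set X = {x_1,...,x_K}
   is a map x : 'I_K -> 'cV_d with K = k.+1; x_1 is x ord0. *)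

Section Defs.
Variable R : realType.

Definition simplex (K : nat) : set ('I_K -> R) :=
  [set p | (forall i, 0 <= p i) /\ \sum_(i < K) p i = 1].

Definition quadf (d : nat) (M : 'M[R]_d) (y : 'cV[R]_d) : R :=
  (y^T *m M *m y) 0 0.

(* ||y||^2_{A^{-1}} := lim_{lambda -> 0+} y^T (A + lambda I)^{-1} y, in \bar R
   (possibly +oo) *)
Definition pinvnorm2 (d : nat) (A : 'M[R]_d) (y : 'cV[R]_d) : \bar R :=
  lim ((fun l : R => (quadf (invmx (A + l%:M)) y)%:E) @ 0^'+).

Definition xbar (d K : nat) (x : 'I_K -> 'cV[R]_d) (p : 'I_K -> R) : 'cV[R]_d :=
  \sum_(i < K) p i *: x i.

Definition Sigma_cov (d K : nat) (x : 'I_K -> 'cV[R]_d) (p : 'I_K -> R)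
  : 'M[R]_d :=
  \sum_(i < K) p i *: ((x i - xbar x p) *m (x i - xbar x p)^T).

Definition Sigma_m1 (d k : nat) (x : 'I_k.+1 -> 'cV[R]_d) (p : 'I_k.+1 -> R)
  : 'M[R]_d :=
  \sum_(i < k.+1) p i *: ((x i - x ord0) *m (x i - x ord0)^T).

Definition diam2 (d : nat) (A : seq 'cV[R]_d) (M : 'M[R]_d) : \bar R :=
  \big[maxe/0%E]_(u <- A) \big[maxe/0%E]_(u' <- A) pinvnorm2 M (u - u').

Definition Vcov (d K : nat) (A : seq 'cV[R]_d) (x : 'I_K -> 'cV[R]_d)
  (p : 'I_K -> R) : \bar R := diam2 A (Sigma_cov x p).

(* V*_lin(A : X - x_1) := min over the simplex (written as inf) *)
Definition Vlin_star (d k : nat) (A : seq 'cV[R]_d) (x : 'I_k.+1 -> 'cV[R]_d)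
  : \bar R :=
  ereal_inf [set diam2 A (Sigma_m1 x p) | p in @simplex k.+1].

Definition gap (d : nat) (theta zs z : 'cV[R]_d) : R :=
  ((zs - z)^T *m theta) 0 0.

Definition tau_star (d k : nat) (Z : seq 'cV[R]_d) (zs theta : 'cV[R]_d)
  (x : 'I_k.+1 -> 'cV[R]_d) : \bar R :=
  ereal_inf [set \big[maxe/0%E]_(z <- Z | z != zs)
                   (pinvnorm2 (Sigma_m1 x p) (zs - z) * ((gap theta zs z) ^- 2)%:E)%E
             | p in @simplex k.+1].

(* p_xor(A) built from a minimizer ptil with ptil_1 = 0 *)
Definition p_xor (k : nat) (ptil : 'I_k.+1 -> R) : 'I_k.+1 -> R :=
  fun i => if i == ord0 then 1 / 2 else ptil i / 2.

End Defs.
Arguments simplex R K : clear implicits.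

From HB Require Import structures.
From mathcomp Require Import all_boot all_order all_algebra.
From mathcomp Require Import all_classical all_reals all_analysis.
From mathcomp Require Import ring lra.
Set Implicit Arguments. Unset Strict Implicit. Unset Printing Implicit Defensive.
Import Order.TTheory GRing.Theory Num.Theory.
Local Open Scope classical_set_scope.
Local Open Scope ring_scope.

(* For a positive semidefinite M the map M |-> ||y||^2_{M^-1} is
   antitone in the Loewner order, and ||a - b||^2_{M^-1} <= 2 ||a||^2_{M^-1}
   + 2 ||b||^2_{M^-1}.  Every u in A satisfies ||z* - u||^2 <= tau Delta_u^2
   <= 16 tau eps^2, so ||u - u'||^2 <= 64 tau eps^2, which gives the first
   bound after minimising over the design.  For the second, the covariance of
   p = (p_xor + q)/2 dominates Sigma_{-1, ptil} / 8 in the Loewner order: the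
   weight >= 1/4 on x_1 controls the offset of the mean from x_1 and the weight
   >= ptil/4 on the other arms controls the spread around the mean. *)

Section QuadraticForms.
Variables (R : realType) (d : nat).
Implicit Types (c l : R) (M N P Q : 'M[R]_d) (u v w y : 'cV[R]_d).

Definition dotv u v : R := (u^T *m v) 0 0.
Definition bilf P u v : R := (u^T *m P *m v) 0 0.
Definition psdmx M : Prop := M^T = M /\ forall v, 0 <= quadf M v.

Lemma dotvE u v : dotv u v = \sum_j u j 0 * v j 0.
Proof. by rewrite /dotv mxE; apply: eq_bigr => j _; rewrite mxE. Qed.

Lemma dotvC u v : dotv u v = dotv v u.
Proof. by rewrite !dotvE; apply: eq_bigr => j _; rewrite mulrC. Qed.

Lemma dotvBl u w v : dotv (u - w) v = dotv u v - dotv w v.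
Proof. by rewrite !dotvE -sumrB; apply: eq_bigr => j _; rewrite !mxE mulrBl. Qed.

Lemma dotvZl c u v : dotv (c *: u) v = c * dotv u v.
Proof. by rewrite !dotvE mulr_sumr; apply: eq_bigr => j _; rewrite mxE mulrA. Qed.

Lemma dotv_suml (K : nat) (a : 'I_K -> R) (x : 'I_K -> 'cV[R]_d) v :
  dotv (\sum_i a i *: x i) v = \sum_i a i * dotv (x i) v.
Proof.
rewrite dotvE; under eq_bigr do rewrite summxE mulr_suml.
rewrite exchange_big; apply: eq_bigr => i _; rewrite dotvE mulr_sumr.
by apply: eq_bigr => j _; rewrite mxE mulrA.
Qed.

Lemma dotv_ge0 v : 0 <= dotv v v.
Proof. by rewrite dotvE sumr_ge0 // => j _; rewrite -expr2 sqr_ge0. Qed.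

Lemma dotv_gt0 v : v != 0 -> 0 < dotv v v.
Proof.
move=> vn0; rewrite lt_def dotv_ge0 andbT; apply: contraNN vn0 => /eqP.
rewrite dotvE => /psumr_eq0P v0; apply/eqP/matrixP => i j.
have /eqP := v0 (fun j _ => ltac:(by rewrite -expr2 sqr_ge0)) i isT.
by rewrite (ord1 j) mxE mulf_eq0 orbb => /eqP.
Qed.

Lemma quadfD M N v : quadf (M + N) v = quadf M v + quadf N v.
Proof. by rewrite /quadf mulmxDr mulmxDl mxE. Qed.

Lemma quadfZ c M v : quadf (c *: M) v = c * quadf M v.
Proof. by rewrite /quadf -scalemxAr -scalemxAl mxE. Qed.

Lemma quadf_sum (K : nat) (F : 'I_K -> 'M[R]_d) v :
  quadf (\sum_i F i) v = \sum_i quadf (F i) v.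
Proof.
elim/big_ind2: _ => [|? ? ? ? <- <-|//]; last by rewrite quadfD.
by rewrite /quadf mulmx0 mul0mx mxE.
Qed.

Lemma quadf_outer w v : quadf (w *m w^T) v = dotv w v ^+ 2.
Proof.
rewrite /quadf !mulmxA -(mulmxA _ w^T) mxE big_ord1.
by rewrite -/(dotv v w) -[(w^T *m v) 0 0]/(dotv w v) dotvC expr2.
Qed.

Lemma quadf_scalar l v : quadf l%:M v = l * dotv v v.
Proof. by rewrite /quadf mul_mx_scalar -scalemxAl mxE. Qed.

Lemma quadfZv c M v : quadf M (c *: v) = c ^+ 2 * quadf M v.
Proof.
by rewrite /quadf -scalemxAr [(c *: v)^T]linearZ -!scalemxAl !mxE mulrA expr2.
Qed.

Lemma quadfNv M v : quadf M (- v) = quadf M v.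
Proof. by rewrite -scaleN1r quadfZv sqrrN expr1n mul1r. Qed.

Lemma bilfC P u v : P^T = P -> bilf P v u = bilf P u v.
Proof.
move=> sP; rewrite /bilf -[in RHS](trmxK (u^T *m P *m v)) [in RHS]mxE.
by rewrite !trmx_mul trmxK sP mulmxA.
Qed.

Lemma quadfBv P u v :
  P^T = P -> quadf P (u - v) = quadf P u - 2 * bilf P u v + quadf P v.
Proof.
move=> sP; have := bilfC u v sP; rewrite /quadf /bilf [(u - v)^T]linearB /=.
rewrite mulmxBr !mulmxBl.
move: (u^T *m P *m u) (u^T *m P *m v) (v^T *m P *m u) (v^T *m P *m v).
by move=> a b c e cb; rewrite !mxE cb; lra.
Qed.

Lemma quadfBv_le P u v :
  psdmx P -> quadf P (u - v) <= 2 * quadf P u + 2 * quadf P v.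
Proof.
move=> [sP psdP]; have := psdP (u - - v); rewrite !quadfBv // quadfNv.
have -> : bilf P u (- v) = - bilf P u v by rewrite /bilf mulmxN mxE.
lra.
Qed.

Lemma psdmx_outer_sum (K : nat) (a : 'I_K -> R) (w : 'I_K -> 'cV[R]_d) :
  (forall i, 0 <= a i) -> psdmx (\sum_i a i *: (w i *m (w i)^T)).
Proof.
move=> a0; split.
  rewrite linear_sum; apply: eq_bigr => i _.
  by rewrite linearZ /= trmx_mul trmxK.
move=> v; rewrite quadf_sum sumr_ge0 // => i _.
by rewrite quadfZ quadf_outer mulr_ge0 ?sqr_ge0.
Qed.

Lemma unitmx_posdef P : (forall v, v != 0 -> 0 < quadf P v) -> P \in unitmx.
Proof.
move=> pdP; rewrite unitmxE unitfE; apply/negP => /det0P [v vn0 vP0].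
have /pdP : v^T != 0 by rewrite trmx_eq0.
by rewrite /quadf trmxK vP0 mul0mx mxE ltxx.
Qed.

Lemma quadf_invmx P y :
  P^T = P -> P \in unitmx -> quadf P (invmx P *m y) = quadf (invmx P) y.
Proof.
move=> sP uP; rewrite /quadf -[_ *m P *m _]mulmxA (mulmxA P) mulmxV // mul1mx.
by rewrite trmx_mul trmx_inv sP.
Qed.

Lemma dotv_invmx P y :
  P^T = P -> dotv (invmx P *m y) y = quadf (invmx P) y.
Proof. by move=> sP; rewrite /dotv /quadf trmx_mul trmx_inv sP. Qed.

Lemma bilf_invmx P w y :
  P \in unitmx -> bilf P w (invmx P *m y) = dotv w y.
Proof. by move=> uP; rewrite /bilf -mulmxA (mulmxA P) mulmxV // mul1mx. Qed.

(* Variational formula y^T P^-1 y = max_w (2 w^T y - w^T P w), maximum at P^-1 y. *)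
Lemma quadf_invmx_ge P w y :
  psdmx P -> P \in unitmx -> 2 * dotv w y - quadf P w <= quadf (invmx P) y.
Proof.
move=> [sP psdP] uP; have := psdP (w - invmx P *m y).
rewrite quadfBv // bilf_invmx // quadf_invmx //; lra.
Qed.

Lemma quadf_invmx_le_scale P Q c y :
  psdmx P -> psdmx Q -> P \in unitmx -> Q \in unitmx -> 0 < c ->
  (forall v, c * quadf Q v <= quadf P v) ->
  quadf (invmx P) y <= c^-1 * quadf (invmx Q) y.
Proof.
move=> [sP _] psdQ uP uQ c0 cQP; set w := invmx P *m y.
(* test the variational formula for Q^-1 at c P^-1 y *)
have := quadf_invmx_ge (c *: w) y psdQ uQ.
rewrite dotvZl quadfZv dotv_invmx // => hQ.
have := cQP w; rewrite quadf_invmx // => hP.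
rewrite ler_pdivlMl //; move: hQ hP.
set a := quadf (invmx P) y; set b := quadf Q w; set f := quadf (invmx Q) y.
nra.
Qed.

Lemma psdmx_shift M l : psdmx M -> 0 <= l -> psdmx (M + l%:M).
Proof.
move=> [sM psdM] l0; split; first by rewrite linearD /= tr_scalar_mx sM.
by move=> v; rewrite quadfD quadf_scalar addr_ge0 ?mulr_ge0 ?dotv_ge0.
Qed.

Lemma unitmx_shift M l : psdmx M -> 0 < l -> M + l%:M \in unitmx.
Proof.
move=> [_ psdM] l0; apply: unitmx_posdef => v vn0.
by rewrite quadfD quadf_scalar ltr_wpDl // mulr_gt0 // dotv_gt0.
Qed.

Lemma psdmx_invmx_shift M l : psdmx M -> 0 < l -> psdmx (invmx (M + l%:M)).
Proof.
move=> psdM l0; have [sMl psdMl] := psdmx_shift psdM (ltW l0).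
split; first by rewrite trmx_inv sMl.
by move=> v; rewrite -quadf_invmx ?unitmx_shift.
Qed.

Lemma quadf_invmx_shift_nonincr M y l l' : psdmx M -> 0 < l -> l <= l' ->
  quadf (invmx (M + l'%:M)) y <= quadf (invmx (M + l%:M)) y.
Proof.
move=> psdM l0 ll'; have l'0 := lt_le_trans l0 ll'.
rewrite -[X in _ <= X]mul1r -[X in X * _]invr1.
apply: quadf_invmx_le_scale; rewrite ?unitmx_shift //.
- exact: psdmx_shift (ltW l'0).
- exact: psdmx_shift (ltW l0).
- by move=> v; rewrite mul1r !quadfD !quadf_scalar lerD2l ler_wpM2r ?dotv_ge0.
Qed.

End QuadraticForms.

Local Open Scope ereal_scope.

Section GeneralizedInverseNorm.
Variables (R : realType) (d : nat).
Implicit Types (M N : 'M[R]_d) (u v y : 'cV[R]_d).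

(* The limit defining pinvnorm2 is that of a nonincreasing function of the
   regularisation parameter, hence its supremum. *)
Lemma pinvnorm2_sup M y : psdmx M ->
  pinvnorm2 M y =
  ereal_sup [set (quadf (invmx (M + l%:M)) y)%:E | l in [set l : R | 0 < l]%R].
Proof.
move=> psdM; rewrite /pinvnorm2; apply: cvg_lim => //.
have -> : [set (quadf (invmx (M + l%:M)) y)%:E | l in [set l : R | 0 < l]%R] =
    (fun l => (quadf (invmx (M + l%:M)) y)%:E) @`
      [set` Interval (BRight 0%R) (BInfty R false)].
  by congr image; apply/seteqP; split => l /=; rewrite in_itv /= andbT.
apply: nonincreasing_at_right_cvge => // l l'; rewrite !in_itv /= !andbT.
by move=> l0 _ ll'; rewrite lee_fin quadf_invmx_shift_nonincr.
Qed.

Lemma pinvnorm2_ge0 M y : psdmx M -> 0 <= pinvnorm2 M y.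
Proof.
move=> psdM; rewrite pinvnorm2_sup //.
apply: (le_trans (y := (quadf (invmx (M + 1%:M)) y)%:E)).
  by rewrite lee_fin; apply: (psdmx_invmx_shift psdM ltr01).2.
by apply: ereal_sup_ubound; exists 1%R => //=; exact: ltr01.
Qed.

Lemma pinvnorm2_0 M : psdmx M -> pinvnorm2 M 0 = 0.
Proof.
move=> psdM; apply/eqP; rewrite eq_le pinvnorm2_ge0 // andbT pinvnorm2_sup //.
by apply: ge_ereal_sup => _ [l _ <-]; rewrite /quadf mulmx0 mxE.
Qed.

Lemma pinvnorm2_le_scale M N c y : psdmx M -> psdmx N -> (0 < c)%R ->
  (forall v, c * quadf N v <= quadf M v)%R ->
  pinvnorm2 M y <= (c^-1)%:E * pinvnorm2 N y.
Proof.
move=> psdM psdN c0 cNM; rewrite !pinvnorm2_sup //.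
apply: ge_ereal_sup => _ [l /= l0 <-]; have lc0 : (0 < l / c)%R by rewrite divr_gt0.
apply: (@le_trans _ _ (c^-1 * quadf (invmx (N + (l / c)%:M)) y)%:E).
  rewrite lee_fin; apply: quadf_invmx_le_scale; rewrite ?unitmx_shift //.
  - exact: psdmx_shift (ltW l0).
  - exact: psdmx_shift (ltW lc0).
  - move=> v; rewrite !quadfD !quadf_scalar mulrDr mulrA mulrCA divff ?gt_eqF //.
    by rewrite mulr1 lerD2r.
rewrite EFinM; apply: lee_wpmul2l; first by rewrite lee_fin invr_ge0 ltW.
by apply: ereal_sup_ubound; exists (l / c)%R.
Qed.

Lemma pinvnorm2_subr_le M u v : psdmx M ->
  pinvnorm2 M (u - v) <= 2%:E * (pinvnorm2 M u + pinvnorm2 M v).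
Proof.
move=> psdM; rewrite !pinvnorm2_sup //; apply: ge_ereal_sup => _ [l /= l0 <-].
apply: (le_trans (y := 2%:E * ((quadf (invmx (M + l%:M)) u)%:E +
                                 (quadf (invmx (M + l%:M)) v)%:E))).
  rewrite -EFinD -EFinM lee_fin mulrDr.
  exact: quadfBv_le (psdmx_invmx_shift psdM l0).
by rewrite lee_wpmul2l ?lee_fin //; apply: leeD; apply: ereal_sup_ubound; exists l.
Qed.

Lemma diam2_ge0 (A : seq 'cV[R]_d) M : 0 <= diam2 A M.
Proof. exact: bigmax_ge_id. Qed.

Lemma diam2_le (A : seq 'cV[R]_d) M C : 0 <= C ->
  (forall u u', u \in A -> u' \in A -> pinvnorm2 M (u - u') <= C) ->
  diam2 A M <= C.
Proof.
move=> C0 uu'C; rewrite /diam2 big_seq_cond; apply: bigmax_le => // u /andP[uA _].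
by rewrite big_seq_cond; apply: bigmax_le => // u' /andP[u'A _]; apply: uu'C.
Qed.

Lemma le_diam2 (A : seq 'cV[R]_d) M u u' : u \in A -> u' \in A ->
  pinvnorm2 M (u - u') <= diam2 A M.
Proof.
move=> uA u'A; apply: le_trans (le_bigmax_seq _ _ _ _ uA isT).
exact: (le_bigmax_seq _ _ _ _ u'A isT).
Qed.

Lemma diam2_le_scale (A : seq 'cV[R]_d) M N c : psdmx M -> psdmx N -> (0 < c)%R ->
  (forall v, c * quadf N v <= quadf M v)%R ->
  diam2 A M <= (c^-1)%:E * diam2 A N.
Proof.
move=> psdM psdN c0 cNM; apply: diam2_le => [|u u' uA u'A].
  by rewrite mule_ge0 ?diam2_ge0 // lee_fin invr_ge0 ltW.
apply: le_trans (pinvnorm2_le_scale _ psdM psdN c0 cNM) _.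
by rewrite lee_wpmul2l ?le_diam2 // lee_fin invr_ge0 ltW.
Qed.

End GeneralizedInverseNorm.

Local Close Scope ereal_scope.

Lemma wsum_sqr_anchor_le (R : realType) (K : nat) (w a : 'I_K -> R) (c m : R) :
  (forall i, 0 <= w i) -> \sum_i w i = 1 ->
  \sum_i w i * (a i - c) ^+ 2 <= 2 * ((c - m) ^+ 2 + \sum_i w i * (a i - m) ^+ 2).
Proof.
move=> w0 w1; rewrite mulrDr -[X in X + _]mulr1 -w1 !mulr_sumr -big_split /=.
apply: ler_sum => i _; have := w0 i; have := sqr_ge0 (a i + c - 2 * m).
nra.
Qed.

Lemma p_xor_spread_ge (R : realType) (k : nat) (a ptil q : 'I_k.+1 -> R) (m : R) :
  (forall i, 0 <= ptil i) -> \sum_i ptil i = 1 -> ptil ord0 = 0 ->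
  (forall i, 0 <= q i) ->
  (\sum_i ptil i * (a i - a ord0) ^+ 2) / 8 <=
  \sum_i (p_xor ptil i + q i) / 2 * (a i - m) ^+ 2.
Proof.
move=> ptil0 ptil1 ptil00 q0.
have weights : ((a ord0 - m) ^+ 2 + \sum_i ptil i * (a i - m) ^+ 2) / 4 <=
    \sum_i (p_xor ptil i + q i) / 2 * (a i - m) ^+ 2.
  rewrite !big_ord_recl ptil00 /p_xor eqxx mul0r add0r mulrDl mulr_suml.
  apply: lerD; first by have := q0 ord0; have := sqr_ge0 (a ord0 - m); nra.
  apply: ler_sum => i _; rewrite eq_sym (negbTE (neq_lift ord0 i)).
  have := q0 (lift ord0 i); have := ptil0 (lift ord0 i).
  have := sqr_ge0 (a (lift ord0 i) - m); nra.
have := wsum_sqr_anchor_le a (a ord0) m ptil0 ptil1.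
rewrite -[a ord0 - m]opprB sqrrN in weights; lra.
Qed.

Section DesignMatrices.
Variables (R : realType) (d k : nat) (x : 'I_k.+1 -> 'cV[R]_d).
Implicit Types (p : 'I_k.+1 -> R) (v : 'cV[R]_d).

Lemma psdmx_Sigma_m1 p : (forall i, 0 <= p i) -> psdmx (Sigma_m1 x p).
Proof. exact: psdmx_outer_sum. Qed.

Lemma psdmx_Sigma_cov p : (forall i, 0 <= p i) -> psdmx (Sigma_cov x p).
Proof. exact: psdmx_outer_sum. Qed.

Lemma quadf_Sigma_m1 p v :
  quadf (Sigma_m1 x p) v = \sum_i p i * (dotv (x i) v - dotv (x ord0) v) ^+ 2.
Proof.
rewrite quadf_sum; apply: eq_bigr => i _.
by rewrite quadfZ quadf_outer dotvBl.
Qed.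

Lemma quadf_Sigma_cov p v :
  quadf (Sigma_cov x p) v =
  \sum_i p i * (dotv (x i) v - \sum_j p j * dotv (x j) v) ^+ 2.
Proof.
rewrite quadf_sum; apply: eq_bigr => i _.
by rewrite quadfZ quadf_outer dotvBl dotv_suml.
Qed.

Lemma Sigma_cov_p_xor_ge ptil q v :
  (forall i, 0 <= ptil i) -> \sum_i ptil i = 1 -> ptil ord0 = 0 ->
  (forall i, 0 <= q i) ->
  8^-1 * quadf (Sigma_m1 x ptil) v <=
  quadf (Sigma_cov x (fun i => (p_xor ptil i + q i) / 2)) v.
Proof.
move=> ptil0 ptil1 ptil00 q0; rewrite quadf_Sigma_m1 quadf_Sigma_cov mulrC.
exact: p_xor_spread_ge.
Qed.

End DesignMatrices.

Lemma gap_gt0 (R : realType) (d : nat) (Z : seq 'cV[R]_d) (theta zs : 'cV[R]_d) :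
  (forall z, z \in Z -> z != zs -> (z^T *m theta) 0 0 < (zs^T *m theta) 0 0) ->
  forall z, z \in Z -> z != zs -> 0 < gap theta zs z.
Proof.
move=> zs_max z zZ zzs; have := zs_max z zZ zzs.
rewrite /gap [(zs - z)^T]linearB /= mulmxBl.
by move: (zs^T *m theta) (z^T *m theta) => a b; rewrite !mxE subr_gt0.
Qed.

Local Open Scope ereal_scope.

Section GapBound.
Variables (R : realType) (d : nat) (M : 'M[R]_d) (Z A : seq 'cV[R]_d).
Variables (theta zs : 'cV[R]_d) (eps : R) (T : \bar R).
Hypotheses (psdM : psdmx M) (eps_gt0 : (0 < eps)%R) (AZ : {subset A <= Z}).
Hypothesis gap_pos : forall z, z \in Z -> z != zs -> (0 < gap theta zs z)%R.
Hypothesis gap_small : forall z, z \in A -> z != zs -> (gap theta zs z <= 4 * eps)%R.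
Hypothesis T_ge0 : 0 <= T.
Hypothesis T_ge : forall z, z \in Z -> z != zs ->
  pinvnorm2 M (zs - z) * ((gap theta zs z) ^- 2)%:E <= T.

Lemma pinvnorm2_gap_le z : z \in A -> pinvnorm2 M (zs - z) <= T * (16 * eps ^+ 2)%:E.
Proof.
move=> zA; have [->|zzs] := eqVneq z zs.
  by rewrite subrr pinvnorm2_0 // mule_ge0 // lee_fin mulr_ge0 // sqr_ge0.
have g0 := gap_pos (AZ zA) zzs; have g4 := gap_small zA zzs.
set g := gap theta zs z in g0 g4 *.
have -> : pinvnorm2 M (zs - z) = pinvnorm2 M (zs - z) * (g ^- 2)%:E * (g ^+ 2)%:E.
  by rewrite -muleA -EFinM mulVf ?mule1 // expf_neq0 // gt_eqF.
apply: (le_trans (y := T * (g ^+ 2)%:E)).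
  by apply: lee_wpmul2r; [rewrite lee_fin sqr_ge0 | exact: T_ge (AZ zA) zzs].
apply: lee_wpmul2l => //; rewrite lee_fin.
have : (g ^+ 2 <= (4 * eps) ^+ 2)%R by rewrite lerXn2r // ?nnegrE ltW // mulr_gt0.
by rewrite exprMn; lra.
Qed.

(* ||u - u'||^2 <= 2 ||z* - u'||^2 + 2 ||z* - u||^2 *)
Lemma diam2_gap_le : diam2 A M <= (64 * eps ^+ 2)%:E * T.
Proof.
have e2 : (0 < eps ^+ 2)%R by rewrite exprn_gt0.
case: T T_ge0 pinvnorm2_gap_le => [t t0 gap_le| _ _|//].
  apply: diam2_le => [|u u' uA u'A].
    by rewrite -EFinM lee_fin; apply: mulr_ge0; [rewrite mulr_ge0 ?ltW | rewrite -lee_fin].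
  have -> : (u - u' = (zs - u') - (zs - u))%R by rewrite opprB [RHS]addrC addrA subrK.
  apply: le_trans (pinvnorm2_subr_le _ _ psdM) _.
  apply: (le_trans (y := 2%:E * ((t * (16 * eps ^+ 2))%:E + (t * (16 * eps ^+ 2))%:E))).
    by apply: lee_wpmul2l => //; apply: leeD; rewrite EFinM gap_le.
  by rewrite -EFinD -!EFinM lee_fin; lra.
by rewrite gt0_muley ?leey // lte_fin mulr_gt0.
Qed.

End GapBound.

Local Close Scope ereal_scope.

Lemma Vlin_star_le_tau (R : realType) (d k : nat) (x : 'I_k.+1 -> 'cV[R]_d)
    (Z A : seq 'cV[R]_d) (theta zs : 'cV[R]_d) (eps : R) :
  0 < eps -> {subset A <= Z} ->
  (forall z, z \in Z -> z != zs -> 0 < gap theta zs z) ->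
  (forall z, z \in A -> z != zs -> gap theta zs z <= 4 * eps) ->
  (Vlin_star A x <= (64 * eps ^+ 2)%:E * tau_star Z zs theta x)%E.
Proof.
move=> eps_gt0 AZ gap_pos gap_small.
have c0 : 0 < 64 * eps ^+ 2 by rewrite mulr_gt0 // exprn_gt0.
rewrite -lee_pdivrMl //; apply: le_ereal_inf_tmp => _ [p /= [p0 p1] <-].
rewrite lee_pdivrMl //; apply: (le_trans (ereal_inf_lbound _)); first by exists p.
apply: diam2_gap_le AZ gap_pos gap_small _ _ => //.
- exact: psdmx_Sigma_m1.
- exact: bigmax_ge_id.
- move=> z zZ zzs; rewrite big_seq_cond.
  by apply: (le_bigmax_seq _ _ _ _ zZ); rewrite /= zZ zzs.
Qed.

Lemma Vcov_p_xor_le (R : realType) (d k : nat) (x : 'I_k.+1 -> 'cV[R]_d)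
    (A : seq 'cV[R]_d) (ptil q : 'I_k.+1 -> R) :
  ptil \in simplex R k.+1 -> ptil ord0 = 0 -> q \in simplex R k.+1 ->
  (Vcov A x (fun i => ((p_xor ptil i + q i) / 2)%R) <=
   8%:E * diam2 A (Sigma_m1 x ptil))%E.
Proof.
move=> /set_mem[ptil0 ptil1] ptil00 /set_mem[q0 _].
have p0 i : 0 <= (p_xor ptil i + q i) / 2.
  by rewrite divr_ge0 ?addr_ge0 // /p_xor; case: eqP => // _; rewrite divr_ge0.
rewrite -[8]invrK; apply: diam2_le_scale.
- exact: psdmx_Sigma_cov.
- exact: psdmx_Sigma_m1.
- by rewrite invr_gt0.
- by move=> v; apply: Sigma_cov_p_xor_ge.
Qed.

Theorem mainTheorem7 (R : realType) (d k : nat) (x : 'I_k.+1 -> 'cV[R]_d)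
  (Z : seq 'cV[R]_d) (theta zs : 'cV[R]_d)
  (zsZ : zs \in Z)
  (zs_uniq : forall z, z \in Z -> z != zs ->
     ((z^T *m theta) 0 0 < (zs^T *m theta) 0 0))
  (eps : R) (eps_gt0 : 0 < eps)
  (A : seq 'cV[R]_d) (AZ : {subset A <= Z}) (zsA : zs \in A)
  (hgap : forall z, z \in A -> z != zs -> gap theta zs z <= 4 * eps) :
  (Vlin_star A x <= (64 * eps ^+ 2)%:E * tau_star Z zs theta x)%E /\
  (forall ptil : 'I_k.+1 -> R, ptil \in simplex R k.+1 -> ptil ord0 = 0 ->
     diam2 A (Sigma_m1 x ptil) = Vlin_star A x ->
   forall q : 'I_k.+1 -> R, q \in simplex R k.+1 ->
     (Vcov A x (fun i => ((p_xor ptil i + q i) / 2)%R)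
        <= (512 * eps ^+ 2)%:E * tau_star Z zs theta x)%E).
Proof.
have Vlin_le := Vlin_star_le_tau x eps_gt0 AZ (gap_gt0 zs_uniq) hgap.
split=> // ptil ptil_simplex ptil00 ptil_min q q_simplex.
apply: le_trans (Vcov_p_xor_le x A ptil_simplex ptil00 q_simplex) _.
rewrite ptil_min (_ : 512 * eps ^+ 2 = 8 * (64 * eps ^+ 2)); last by lra.
by rewrite EFinM -muleA lee_wpmul2l.
Qed.
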